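(* Let $p\in(0,1)$ and let $U\sim\mathrm{Bernoulli}(p)$, with $U_1=U_2=U_Y=U$. Consider the two structural causal models $$\mathcal{M}:\ X_1=U_1,\ X_2=X_1U_2,\ Y=X_1X_2U_Y; \qquad \mathcal{M}':\ X_1=U_1,\ X_2=U_2,\ Y=X_1X_2U_Y.$$ Then $\mathcal{M}$ and $\mathcal{M}'$ induce the same observational distribution of $(X_1,X_2,Y)$, the same joint interventional distributions $\mathsf{P}(Y\mid \mathrm{do}(X_1=x_1,X_2=x_2))$ for all $x_1,x_2\in\{0,1\}$, and the same interventional distributions $\mathsf{P}(Y,X_1\mid\mathrm{do}(X_2=x_2))$ for all $x_2\in\{0,1\}$, but different interventional distributions $\mathsf{P}(Y,X_2\mid\mathrm{do}(X_1=x_1))$. Consequently, without restrictions on the structural causal model, single-variable interventional effects are not identifiable from observational and joint interventional data.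
   Context: In a structural causal model, an intervention $\mathrm{do}(X=x)$ replaces the structural equation of $X$ by the constant $x$, leaving the other equations and the noise distribution unchanged. An interventional quantity is identifiable from given data regimes if any two models agreeing on those data regimes agree on that quantity. *)

From mathcomp Require Import all_boot all_order all_algebra.
Set Implicit Arguments. Unset Strict Implicit. Unset Printing Implicit Defensive.
Import Order.TTheory GRing.Theory Num.Theory.
Local Open Scope ring_scope.

(* An SCM over binary variables X1, X2, Y with noise U1 = U2 = UY = U.
   Values in {0,1} are encoded as bool (false = 0, true = 1); products of
   {0,1}-values are boolean conjunctions. *)
Record scm := SCM {
  f1 : bool -> bool;
  f2 : bool -> bool -> bool;
  fY : bool -> bool -> bool -> bool }.

(* Solution of the (possibly intervened) model for noise value u:
   Some a on X_i means do(X_i = a), which replaces the equation of X_i. *)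
Definition solve (M : scm) (i1 i2 : option bool) (u : bool) : bool * bool * bool :=
  let x1 := if i1 is Some a then a else f1 M u in
  let x2 := if i2 is Some b then b else f2 M x1 u in
  (x1, x2, fY M x1 x2 u).

Definition pU {R : realFieldType} (p : R) (u : bool) : R := if u then p else 1 - p.

Definition pmf {R : realFieldType} {T : eqType} (p : R) (M : scm)
  (i1 i2 : option bool) (g : bool * bool * bool -> T) (t : T) : R :=
  \sum_(u : bool) pU p u * ((g (solve M i1 i2 u) == t) : nat)%:R.

Definition M_scm : scm := SCM (fun u => u) (fun x1 u => x1 && u)
  (fun x1 x2 u => [&& x1, x2 & u]).
Definition M'_scm : scm := SCM (fun u => u) (fun _ u => u)
  (fun x1 x2 u => [&& x1, x2 & u]).

From mathcomp Require Import all_boot all_order all_algebra.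
Import Order.TTheory GRing.Theory Num.Theory.
Local Open Scope ring_scope.

(* Since all noises equal U and X1 = U1, the factor U2 in X2 = X1 U2 is
   redundant: both models have the same solution for every noise value,
   unintervened or under any intervention that fixes X2, so they induce the
   same distributions there. Forcing X1 = 0 breaks this: X2 becomes 0 in M
   but stays U in M', so P(Y = 0, X2 = 1 | do(X1 = 0)) is 0 in M and p in M'. *)

Lemma pmfE (R : realFieldType) (T : eqType) (p : R) (M : scm)
    (i1 i2 : option bool) (g : bool * bool * bool -> T) (t : T) :
  pmf p M i1 i2 g t =
  (1 - p) * (g (solve M i1 i2 false) == t)%:R + p * (g (solve M i1 i2 true) == t)%:R.
Proof. by rewrite /pmf big_bool addrC. Qed.

Lemma eq_pmf_solve (R : realFieldType) (T : eqType) (p : R) (M M' : scm)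
    (i1 i2 : option bool) (g : bool * bool * bool -> T) :
  solve M i1 i2 =1 solve M' i1 i2 -> pmf p M i1 i2 g =1 pmf p M' i1 i2 g.
Proof. by move=> eqMM' t; rewrite !pmfE !eqMM'. Qed.

Lemma solve_do_X1X2 (M M' : scm) (x1 x2 : bool) :
  (forall a b u, fY M a b u = fY M' a b u) ->
  solve M (Some x1) (Some x2) =1 solve M' (Some x1) (Some x2).
Proof. by move=> eqY u; rewrite /solve eqY. Qed.

Lemma solve_do_X2 (M M' : scm) (x2 : bool) :
  f1 M =1 f1 M' -> (forall a b u, fY M a b u = fY M' a b u) ->
  solve M None (Some x2) =1 solve M' None (Some x2).
Proof. by move=> eq1 eqY u; rewrite /solve eq1 eqY. Qed.

Lemma solve_M_M'_obs : solve M_scm None None =1 solve M'_scm None None.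
Proof. by case. Qed.

Lemma pmf_M_doX1 (R : realFieldType) (p : R) :
  pmf p M_scm (Some false) None (fun s => (s.2, s.1.2)) (false, true) = 0.
Proof. by rewrite pmfE /= !mulr0 addr0. Qed.

Lemma pmf_M'_doX1 (R : realFieldType) (p : R) :
  pmf p M'_scm (Some false) None (fun s => (s.2, s.1.2)) (false, true) = p.
Proof. by rewrite pmfE /= mulr0 mulr1 add0r. Qed.

Theorem mainTheorem3 (R : realFieldType) (p : R) (hp0 : 0 < p) (hp1 : p < 1) :
  (* same observational distribution of (X1, X2, Y) *)
  (forall t : bool * bool * bool,
     pmf p M_scm None None id t = pmf p M'_scm None None id t) /\
  (* same P(Y | do(X1 = x1, X2 = x2)) *)
  (forall x1 x2 y : bool,
     pmf p M_scm (Some x1) (Some x2) (fun s => s.2) y =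
     pmf p M'_scm (Some x1) (Some x2) (fun s => s.2) y) /\
  (* same P(Y, X1 | do(X2 = x2)) *)
  (forall x2 y x1 : bool,
     pmf p M_scm None (Some x2) (fun s => (s.2, s.1.1)) (y, x1) =
     pmf p M'_scm None (Some x2) (fun s => (s.2, s.1.1)) (y, x1)) /\
  (* different P(Y, X2 | do(X1 = x1)) for some x1 *)
  (exists x1 y x2 : bool,
     pmf p M_scm (Some x1) None (fun s => (s.2, s.1.2)) (y, x2) <>
     pmf p M'_scm (Some x1) None (fun s => (s.2, s.1.2)) (y, x2)).
Proof.
split; [|split; [|split]].
- exact/eq_pmf_solve/solve_M_M'_obs.
- by move=> x1 x2 y; apply/eq_pmf_solve/solve_do_X1X2.
- by move=> x2 y x1; apply/eq_pmf_solve/solve_do_X2.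
- exists false, false, true.
  by rewrite pmf_M_doX1 pmf_M'_doX1; apply/eqP; rewrite eq_sym gt_eqF.
Qed.
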